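(* The language $L\subseteq\{a,b\}^*$ given by the regular expression $(a(ab)^*b)^*$ is definable in $FO[<]$ but not in $FO^2[<,\mathrm{Inv}]$.
   Context: $FO[<]$ is first-order logic over finite words with the order $<$ on positions and unary predicates $a(x)$ (letter at position $x$ is $a$). $FO^2[<,\mathrm{Inv}]$ is its two-variable fragment extended by binary predicates $a(x,y)$ meaning $\exists z(x<z\wedge z<y\wedge a(z))$ (only two variables may be used in formulas). A language is definable in a logic if it is the set of words satisfying some sentence of that logic. *)

From mathcomp Require Import all_boot.
Set Implicit Arguments. Unset Strict Implicit. Unset Printing Implicit Defensive.

Inductive letter := La | Lb.

Definition word := seq letter.

Definition letter_at (w : word) (i : nat) : letter := nth La w i.

Inductive regex :=
| REps
| RSym of letter
| RCat of regex & regex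
| RUnion of regex & regex
| RStar of regex.

Inductive matches : regex -> word -> Prop :=
| m_eps : matches REps [::]
| m_sym c : matches (RSym c) [:: c]
| m_cat r s u v : matches r u -> matches s v -> matches (RCat r s) (u ++ v)
| m_unionl r s w : matches r w -> matches (RUnion r s) w
| m_unionr r s w : matches s w -> matches (RUnion r s) w
| m_star0 r : matches (RStar r) [::]
| m_starS r u v : matches r u -> matches (RStar r) v -> matches (RStar r) (u ++ v).

Definition L_regex : regex :=
  RStar (RCat (RCat (RSym La) (RStar (RCat (RSym La) (RSym Lb)))) (RSym Lb)).

Definition L : word -> Prop := matches L_regex.

Inductive fo :=
| FLt of nat & nat
| FEq of nat & nat
| FLetter of letter & nat
| FNot of fo
| FAnd of fo & fo
| FOr of fo & fo
| FEx of nat & fo.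

Definition upd (nu : nat -> nat) (x i : nat) : nat -> nat :=
  fun y => if y == x then i else nu y.

Fixpoint fo_sat (w : word) (nu : nat -> nat) (f : fo) : Prop :=
  match f with
  | FLt x y => nu x < nu y
  | FEq x y => nu x = nu y
  | FLetter c x => letter_at w (nu x) = c
  | FNot g => ~ fo_sat w nu g
  | FAnd g h => fo_sat w nu g /\ fo_sat w nu h
  | FOr g h => fo_sat w nu g \/ fo_sat w nu h
  | FEx x g => exists i, i < size w /\ fo_sat w (upd nu x i) g
  end.

Fixpoint fo_fv (f : fo) : seq nat :=
  match f with
  | FLt x y | FEq x y => [:: x; y]
  | FLetter _ x => [:: x]
  | FNot g => fo_fv g
  | FAnd g h | FOr g h => fo_fv g ++ fo_fv h
  | FEx x g => [seq y <- fo_fv g | y != x]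
  end.

Definition fo_sentence (f : fo) : Prop := fo_fv f = [::].

(** A language is FO[<]-definable if it is the set of words satisfying
    some FO[<] sentence (the assignment is irrelevant for sentences). *)
Definition FO_definable (K : word -> Prop) : Prop :=
  exists f, fo_sentence f /\ forall w, K w <-> fo_sat w (fun _ => 0) f.

Inductive fo2 :=
| GLt of bool & bool
| GEq of bool & bool
| GLetter of letter & bool
| GInv of letter & bool & bool     (* a(x,y) := exists z, x < z < y /\ a(z) *)
| GNot of fo2
| GAnd of fo2 & fo2
| GOr of fo2 & fo2
| GEx of bool & fo2.

Definition upd2 (nu : bool -> nat) (x : bool) (i : nat) : bool -> nat :=
  fun y => if y == x then i else nu y.

Fixpoint fo2_sat (w : word) (nu : bool -> nat) (f : fo2) : Prop :=
  match f with
  | GLt x y => nu x < nu y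
  | GEq x y => nu x = nu y
  | GLetter c x => letter_at w (nu x) = c
  | GInv c x y => exists z, nu x < z /\ z < nu y /\ z < size w /\ letter_at w z = c
  | GNot g => ~ fo2_sat w nu g
  | GAnd g h => fo2_sat w nu g /\ fo2_sat w nu h
  | GOr g h => fo2_sat w nu g \/ fo2_sat w nu h
  | GEx x g => exists i, i < size w /\ fo2_sat w (upd2 nu x i) g
  end.

Fixpoint fo2_fv (f : fo2) : seq bool :=
  match f with
  | GLt x y | GEq x y | GInv _ x y => [:: x; y]
  | GLetter _ x => [:: x]
  | GNot g => fo2_fv g
  | GAnd g h | GOr g h => fo2_fv g ++ fo2_fv h
  | GEx x g => [seq y <- fo2_fv g | y != x]
  end.

Definition fo2_sentence (f : fo2) : Prop := fo2_fv f = [::].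

Definition FO2Inv_definable (K : word -> Prop) : Prop :=
  exists f, fo2_sentence f /\ forall w, K w <-> fo2_sat w (fun _ => 0) f.

(* A word lies in L exactly when the height (#a - #b) of each of its prefixes stays in
   [0, 2] and the whole word has height 0.  Locally this says: the word starts with a,
   ends with b, and its doubles (equal adjacent letters aa or bb) alternate, the first
   one being aa and the last one bb.  That is a first-order property.

   For FO^2[<,Inv], fix a quantifier depth K and compare u = (a (ab)^N b (ab)^N)^M, a
   word of L, with the word v obtained by inserting one a inside a block; v has odd
   length, so it is not in L.  Around the inserted a, v looks like u at a block
   boundary, so for N and M large every window of either word reappears in every long
   enough stretch of the other one.  With k rounds left, Duplicator answers a move by a
   position carrying the same window of radius 6(k+1), and copies positions near both
   ends exactly.  Neither word has three equal adjacent letters, so both letters occur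
   strictly between any two positions at distance at least 4: equal windows and distant
   positions determine the 2-types, Inv predicates included. *)

From HB Require Import structures.
From mathcomp Require Import all_boot zify.
From Stdlib Require Import ZArith Lia Classical.
Set Implicit Arguments. Unset Strict Implicit. Unset Printing Implicit Defensive.
Arguments letter_at : simpl never.

(* A deterministic automaton for L: the state is the current height in {0,1,2}. *)
Definition next_state (s : nat) (c : letter) : option nat :=
  match s, c with
  | 0, La => Some 1 | 1, La => Some 2 | 1, Lb => Some 0 | 2, Lb => Some 1
  | _, _ => None
  end.

Fixpoint accepts (s : nat) (w : word) : bool :=
  match w with
  | [::] => s == 0
  | c :: w' => if next_state s c is Some s' then accepts s' w' else false
  end.

Definition ab_pow j : word := flatten (nseq j [:: La; Lb]).

Lemma matches_sym c w : matches (RSym c) w -> w = [:: c].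
Proof. by move=> H; inversion H. Qed.

Lemma matches_ab_star w :
  matches (RStar (RCat (RSym La) (RSym Lb))) w -> exists j, w = ab_pow j.
Proof.
move=> H; remember (RStar (RCat (RSym La) (RSym Lb))) as r eqn:E.
elim: H E => //; try by move=> *.
- by move=> r0 _; exists 0.
- move=> r0 u v Hu _ _ IH [Er]; subst r0.
  have [j ->] := IH erefl.
  inversion Hu as [| |r1 r2 u1 u2 Ha Hb| | | |]; subst.
  by rewrite (matches_sym Ha) (matches_sym Hb); exists j.+1.
Qed.

Lemma matches_ab_pow j : matches (RStar (RCat (RSym La) (RSym Lb))) (ab_pow j).
Proof.
elim: j => [|j IH]; first exact: m_star0.
apply: (@m_starS _ [:: La; Lb]) => //.
exact: (@m_cat _ _ [:: La] [:: Lb]) (m_sym _) (m_sym _).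
Qed.

Lemma L_cons j w : L w -> L (La :: ab_pow j ++ Lb :: w).
Proof.
move=> H.
have -> : La :: ab_pow j ++ Lb :: w = (([:: La] ++ ab_pow j) ++ [:: Lb]) ++ w.
  by rewrite -!catA.
apply: m_starS => //.
apply: m_cat; last exact: m_sym.
apply: m_cat; [exact: m_sym | exact: matches_ab_pow].
Qed.

Lemma L_ab_pow_cat j w : L w -> L (ab_pow j ++ w).
Proof. by elim: j => // j IH Hw; apply: (L_cons 0); apply: IH. Qed.

Lemma accepts_ab_pow j w : accepts 1 (ab_pow j ++ w) = accepts 1 w.
Proof. by elim: j. Qed.

Lemma L_accepts w : L w -> accepts 0 w.
Proof.
rewrite /L => H; remember L_regex as r eqn:E.
elim: H E => //; try by move=> *.
move=> r0 u v Hu _ _ IH [Er]; subst r0.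
inversion Hu as [| |r1 r2 u1 u2 Hu1 Hb| | | |]; subst.
inversion Hu1 as [| |r1 r2 u3 u4 Ha Hs| | | |]; subst.
have [j ->] := matches_ab_star Hs.
rewrite (matches_sym Ha) (matches_sym Hb) -!catA /= accepts_ab_pow.
exact: IH.
Qed.

Lemma accepts_decompose n w : size w <= n ->
  (accepts 0 w -> L w) /\
  (accepts 1 w -> exists j w', w = ab_pow j ++ Lb :: w' /\ L w').
Proof.
elim: n w => [|n IH] [|c w] //= Hs; try by split => // _; exact: m_star0.
case: c => /=; split => // H.
- have [j [w' [-> Hw']]] := (IH w Hs).2 H; exact: L_cons.
- case: w Hs H => [|[] w] //= Hs H.
  have [j [w' [-> Hw']]] := (IH w (ltnW Hs)).2 H.
  by exists j.+1, w'.
- by exists 0, w; split => //; apply: (IH w Hs).1.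
Qed.

Lemma L_iff_accepts w : L w <-> accepts 0 w.
Proof. by split; [exact: L_accepts | exact: (accepts_decompose (leqnn _)).1]. Qed.

Local Open Scope Z_scope.

Definition weight (c : letter) : Z := if c is La then 1 else -1.

Fixpoint height (w : word) (t : nat) : Z :=
  if t is t'.+1 then height w t' + weight (letter_at w t') else 0.

Lemma heightS w t : height w t.+1 = height w t + weight (letter_at w t).
Proof. by []. Qed.

Lemma height_cons c w t : height (c :: w) t.+1 = weight c + height w t.
Proof.
elim: t => [|t IH]; first by rewrite /= /letter_at /=; lia.
by rewrite heightS IH heightS /letter_at /=; lia.
Qed.

Lemma accepts_height s w : (s <= 2)%nat ->
  accepts s w <->
  (forall t, (t <= size w)%nat -> 0 <= Z.of_nat s + height w t <= 2) /\
  Z.of_nat s + height w (size w) = 0.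
Proof.
elim: w s => [|c w IH] s Hs.
  split; first by move/eqP => ->; split => // t; rewrite leqn0 => /eqP -> /=.
  by move=> [_ H]; apply/eqP; rewrite /= in H; lia.
rewrite [accepts _ _]/= [size _]/=.
case E: (next_state s c) => [s'|].
- have [Es' Hs'] : Z.of_nat s' = Z.of_nat s + weight c /\ (s' <= 2)%nat.
    by case: s Hs E => [|[|[|s]]] //; case: c => //= _ [<-]; lia.
  rewrite IH // Es'; split=> -[H1 H2].
  + split; last by rewrite height_cons; lia.
    case=> [|t] Ht; first by rewrite /=; lia.
    by rewrite height_cons; have := H1 t Ht; lia.
  + split; last by rewrite height_cons in H2; lia.
    by move=> t Ht; have := H1 t.+1 Ht; rewrite height_cons; lia.
- split=> // -[H1 _]; have := H1 1%nat erefl; rewrite height_cons /=.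
  by case: s Hs E {H1 IH} => [|[|[|s]]] //; case: c => //= _ _; lia.
Qed.

Definition dyck2 w :=
  (forall t, (t <= size w)%nat -> 0 <= height w t <= 2) /\ height w (size w) = 0.

Lemma L_dyck2 w : L w <-> dyck2 w.
Proof. by rewrite L_iff_accepts accepts_height. Qed.

Lemma height_parity w t : exists z, height w t = Z.of_nat t - 2 * z.
Proof.
elim: t => [|t [z IH]]; first by exists 0.
rewrite heightS IH /weight; case: (letter_at w t); [exists z | exists (z + 1)]; lia.
Qed.

Close Scope Z_scope.

Lemma L_even_size w : L w -> ~~ odd (size w).
Proof.
move/L_dyck2 => [_ H]; have [z Hz] := height_parity w (size w).
apply/negP => Hodd; move: H.
by rewrite Hz -(odd_double_half (size w)) Hodd; lia.
Qed.

Definition letter_eqb (c d : letter) : bool :=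
  match c, d with La, La | Lb, Lb => true | _, _ => false end.

Lemma letter_eqP : Equality.axiom letter_eqb.
Proof. by case; case; constructor. Qed.

HB.instance Definition _ := hasDecEq.Build letter letter_eqP.

Section LocalShape.
Variable w : word.
Local Notation n := (size w).
Local Notation ltr := (letter_at w).

Definition double_at x := x.+1 < n /\ ltr x = ltr x.+1.

(* Literal readings of the first-order sentences [fo_*] below. *)
Definition first_letter_a :=
  forall x, x < n -> (forall y, y < n -> ~ y < x) -> ltr x = La.
Definition last_letter_b :=
  forall x, x < n -> (forall y, y < n -> ~ x < y) -> ltr x = Lb.
Definition consecutive_doubles_differ :=
  forall x y, x < n -> y < n -> double_at x -> double_at y -> x < y ->
    (forall z, z < n -> x < z -> z < y -> ~ double_at z) -> ltr x <> ltr y.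
Definition first_double_a :=
  forall x, x < n -> double_at x ->
    (forall z, z < n -> z < x -> ~ double_at z) -> ltr x = La.
Definition last_double_b :=
  forall x, x < n -> double_at x ->
    (forall z, z < n -> x < z -> ~ double_at z) -> ltr x = Lb.

Definition local_shape := [/\ first_letter_a, last_letter_b, consecutive_doubles_differ,
  first_double_a & last_double_b].

Lemma height_SS_change t : ltr t <> ltr t.+1 -> height w t.+2 = height w t.
Proof. by rewrite /=; case: (ltr t); case: (ltr t.+1) => //= _; lia. Qed.

Lemma height_no_double s e : (forall t, s <= t -> t.+2 <= e -> ltr t <> ltr t.+1) ->
  forall d, s + d <= e -> height w (s + d) = if odd d then height w s.+1 else height w s.
Proof.
move=> Hchange; elim/ltn_ind => -[|[|d]] IH Hd; rewrite ?addn0 ?addn1 //.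
have -> : s + d.+2 = (s + d).+2 by lia.
rewrite height_SS_change; last by apply: Hchange; lia.
by rewrite IH //= ?negbK; lia.
Qed.

Section Dyck2.
Hypothesis Hw : dyck2 w.

Lemma double_a_heights x : double_at x -> ltr x = La ->
  [/\ height w x = 0%Z, height w x.+1 = 1%Z & height w x.+2 = 2%Z].
Proof.
move=> [Hx Hl] Ha; have [Hb _] := Hw.
have := Hb x (ltnW (ltnW Hx)); have := Hb x.+2 Hx.
by rewrite /= -Hl Ha /=; split; lia.
Qed.

Lemma double_b_heights x : double_at x -> ltr x = Lb ->
  [/\ height w x = 2%Z, height w x.+1 = 1%Z & height w x.+2 = 0%Z].
Proof.
move=> [Hx Hl] Hb'; have [Hb _] := Hw.
have := Hb x (ltnW (ltnW Hx)); have := Hb x.+2 Hx.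
by rewrite /= -Hl Hb' /=; split; lia.
Qed.

Lemma dyck2_first_letter_a : first_letter_a.
Proof.
have [Hb _] := Hw; move=> [|x] Hx Hmin; last by case: (Hmin 0) => //; lia.
by have := Hb 1 Hx; rewrite /=; case: (ltr 0) => //=; lia.
Qed.

Lemma dyck2_last_letter_b : last_letter_b.
Proof.
have [Hb Hend] := Hw; move=> x Hx Hmax.
have Hn : x.+1 = n by case: (ltngtP x.+1 n) => // Hlt; [case: (Hmax x.+1) | lia].
move: Hend; rewrite -Hn /=; have := Hb x (ltnW Hx).
by case: (ltr x) => //=; lia.
Qed.

Lemma dyck2_consecutive_doubles_differ : consecutive_doubles_differ.
Proof.
move=> x y Hx Hy Dx Dy Hxy Hbetween Heq.
have Hchange t : x.+1 <= t -> t.+2 <= y.+1 -> ltr t <> ltr t.+1.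
  move=> H1 H2 Ht; apply: (Hbetween t); try lia; split => //; case: Dy; lia.
have := height_no_double Hchange (d := y - x.+1).
rewrite (_ : x.+1 + (y - x.+1) = y); last lia.
move=> /(_ ltac:(lia)).
case Ex: (ltr x); move: Heq; rewrite Ex => /esym Ey.
- have [_ -> ->] := double_a_heights Dx Ex; have [-> _ _] := double_a_heights Dy Ey.
  by case: (odd _).
- have [_ -> ->] := double_b_heights Dx Ex; have [-> _ _] := double_b_heights Dy Ey.
  by case: (odd _).
Qed.

Lemma dyck2_first_double_a : first_double_a.
Proof.
move=> x Hx Dx Hmin; case Ex: (ltr x) => //; exfalso.
have Hchange t : 0 <= t -> t.+2 <= x.+1 -> ltr t <> ltr t.+1.
  move=> _ H2 Ht; apply: (Hmin t); try lia; split => //; case: Dx; lia.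
have := height_no_double Hchange (d := x) ltac:(lia); rewrite add0n.
have [-> _ _] := double_b_heights Dx Ex.
by rewrite /=; case: (ltr 0); case: (odd x).
Qed.

Lemma dyck2_last_double_b : last_double_b.
Proof.
have [_ Hend] := Hw; move=> x Hx Dx Hmax; case Ex: (ltr x) => //; exfalso.
have Hchange t : x.+1 <= t -> t.+2 <= n -> ltr t <> ltr t.+1.
  by move=> H1 H2 Ht; apply: (Hmax t); try lia; split.
have Hn : x.+2 <= n by case: Dx.
have := height_no_double Hchange (d := n - x.+1) ltac:(lia).
rewrite (_ : x.+1 + (n - x.+1) = n); last lia.
have [_ -> ->] := double_a_heights Dx Ex.
by rewrite Hend; case: (odd _).
Qed.

Lemma dyck2_local_shape : local_shape.
Proof.
split; [exact: dyck2_first_letter_a | exact: dyck2_last_letter_b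
  | exact: dyck2_consecutive_doubles_differ | exact: dyck2_first_double_a
  | exact: dyck2_last_double_b].
Qed.

End Dyck2.

Fixpoint last_double (t : nat) : option letter :=
  match t with
  | (t'.+1 as t1).+1 => if ltr t' == ltr t1 then Some (ltr t') else last_double t1
  | _ => None
  end.

Lemma last_doubleSS t :
  last_double t.+2 = if ltr t == ltr t.+1 then Some (ltr t) else last_double t.+1.
Proof. by []. Qed.

Lemma last_doubleP t : t <= n ->
  (last_double t = None -> forall z, z.+2 <= t -> ~ double_at z) /\
  (forall c, last_double t = Some c -> exists x,
     [/\ x.+2 <= t, double_at x, ltr x = c &
         forall z, x < z -> z.+2 <= t -> ~ double_at z]).
Proof.
elim: t => [|[|t] IH] Ht; try by split => // _ z; lia.
have [IH1 IH2] := IH (ltnW Ht).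
rewrite last_doubleSS; case: eqP => Heq.
  by split => // c [<-]; exists t; split => // z; lia.
case E: (last_double t.+1) => [c|].
- split => // c' [<-]; have [x [H1 H2 H3 H4]] := IH2 c E.
  exists x; split => //; first lia.
  move=> z Hxz Hz Dz; case: (ltngtP z t) => Hzt; [exact: (H4 z) | lia |].
  by subst z; case: Dz.
- split => // _ z Hz Dz; case: (ltngtP z t) => Hzt; [exact: (IH1 E z) | lia |].
  by subst z; case: Dz.
Qed.

(* Under [local_shape] the height after a prefix is read off its last letter and the
   letter of its last double. *)
Definition expected_height (c : letter) (l : option letter) : Z :=
  match c, l with
  | Lb, None | Lb, Some Lb => 0
  | La, None | La, Some Lb | Lb, Some La => 1
  | La, Some La => 2
  end.

Section LocalShapeDyck2.
Hypothesis Hs : local_shape.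

Lemma local_shape_height t : 0 < t <= n ->
  height w t = expected_height (ltr t.-1) (last_double t).
Proof.
have [Hfirst _ Hdiff Hfst _] := Hs.
elim: t => [|[|t] IH] // /andP [_ Ht].
  by rewrite /= (Hfirst 0) // => y _; lia.
rewrite heightS IH ?last_doubleSS ?succnK; last lia.
case: eqP => Heq; last first.
  by move: Heq; case: (last_double t.+1) => [[]|]; case: (ltr t); case: (ltr t.+1).
have Dt : double_at t by split.
case E: (last_double t.+1) => [c|].
- have [x [Hx Dx <- Hlast]] := (last_doubleP (ltnW Ht)).2 c E.
  have Hne : ltr x <> ltr t.
    apply: Hdiff; [by case: Dx; lia | lia | exact: Dx | exact: Dt | lia |].
    by move=> z _ Hxz Hzt; apply: Hlast; lia.
  by rewrite -Heq; move: Hne; case: (ltr x); case: (ltr t).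
- have Ha : ltr t = La.
    apply: Hfst => //; first lia.
    by move=> z _ Hz; apply: (last_doubleP (ltnW Ht)).1 => //; lia.
  by rewrite -Heq Ha.
Qed.

Lemma local_shape_dyck2 : dyck2 w.
Proof.
have [_ Hlast _ _ Hlst] := Hs.
split.
  case=> [|t] Ht; first by rewrite /=; lia.
  rewrite local_shape_height; last lia.
  by case: (ltr _); case: (last_double _) => [[]|] /=; lia.
case En: n => [|m] //.
rewrite local_shape_height; last lia.
have -> : ltr m = Lb by apply: Hlast; lia.
case E: (last_double m.+1) => [[]|] //.
have [x [Hx Dx Ex Hmax]] :=
  (last_doubleP (leqnn n)).2 La (etrans (f_equal last_double En) E).
rewrite -Ex Hlst //; first by lia.
by move=> z _ Hz Dz; apply: (Hmax z) => //; case: Dz; lia.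
Qed.

End LocalShapeDyck2.
End LocalShape.

Lemma L_local_shape w : L w <-> local_shape w.
Proof.
by rewrite L_dyck2; split; [exact: dyck2_local_shape | exact: local_shape_dyck2].
Qed.

Definition FAll x f := FNot (FEx x (FNot f)).
Definition FImp f g := FOr (FNot f) g.
Definition FSameLetter x y :=
  FOr (FAnd (FLetter La x) (FLetter La y)) (FAnd (FLetter Lb x) (FLetter Lb y)).
(* [y] and [z] are bound; they must differ from [x] and from each other. *)
Definition FDouble x y z :=
  FEx y (FAnd (FAnd (FLt x y) (FNot (FEx z (FAnd (FLt x z) (FLt z y))))) (FSameLetter x y)).

Definition fo_first_letter_a := FAll 0 (FImp (FNot (FEx 1 (FLt 1 0))) (FLetter La 0)).
Definition fo_last_letter_b := FAll 0 (FImp (FNot (FEx 1 (FLt 0 1))) (FLetter Lb 0)).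
Definition fo_consecutive_doubles_differ := FAll 0 (FAll 1 (FImp
  (FAnd (FDouble 0 3 4) (FAnd (FDouble 1 3 4) (FAnd (FLt 0 1)
     (FNot (FEx 2 (FAnd (FLt 0 2) (FAnd (FLt 2 1) (FDouble 2 3 4))))))))
  (FNot (FSameLetter 0 1)))).
Definition fo_first_double_a := FAll 0 (FImp
  (FAnd (FDouble 0 3 4) (FNot (FEx 2 (FAnd (FLt 2 0) (FDouble 2 3 4))))) (FLetter La 0)).
Definition fo_last_double_b := FAll 0 (FImp
  (FAnd (FDouble 0 3 4) (FNot (FEx 2 (FAnd (FLt 0 2) (FDouble 2 3 4))))) (FLetter Lb 0)).

Definition fo_local_shape := FAnd fo_first_letter_a (FAnd fo_last_letter_b
  (FAnd fo_consecutive_doubles_differ (FAnd fo_first_double_a fo_last_double_b))).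

Lemma fo_local_shape_sentence : fo_sentence fo_local_shape.
Proof. by vm_compute. Qed.

Section Semantics.
Variable w : word.
Local Notation n := (size w).
Local Notation ltr := (letter_at w).

Lemma updE nu x i y : upd nu x i y = if y == x then i else nu y.
Proof. by []. Qed.

Lemma sat_And nu f g : fo_sat w nu (FAnd f g) <-> fo_sat w nu f /\ fo_sat w nu g.
Proof. by []. Qed.

Lemma sat_Not nu f : fo_sat w nu (FNot f) <-> ~ fo_sat w nu f.
Proof. by []. Qed.

Lemma sat_Ex nu x f : fo_sat w nu (FEx x f) <-> exists i, i < n /\ fo_sat w (upd nu x i) f.
Proof. by []. Qed.

Lemma sat_Lt nu x y : fo_sat w nu (FLt x y) <-> nu x < nu y.
Proof. by []. Qed.

Lemma sat_All nu x f :
  fo_sat w nu (FAll x f) <-> forall i, i < n -> fo_sat w (upd nu x i) f.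
Proof.
split=> [H i Hi | H [i [Hi Hn]]]; last exact/Hn/H.
by apply: NNPP => Hn; apply: H; exists i.
Qed.

Lemma sat_Imp nu f g : fo_sat w nu (FImp f g) <-> (fo_sat w nu f -> fo_sat w nu g).
Proof.
split=> [[Hn Hf | //] | H]; first by case: Hn.
by case: (classic (fo_sat w nu f)) => Hf; [right; exact: H | left].
Qed.

Lemma sat_SameLetter nu x y : fo_sat w nu (FSameLetter x y) <-> ltr (nu x) = ltr (nu y).
Proof. by rewrite /=; case: (ltr (nu x)); case: (ltr (nu y)); intuition. Qed.

Lemma sat_Double nu x y z : x != y -> x != z -> y != z -> nu x < n ->
  fo_sat w nu (FDouble x y z) <-> double_at w (nu x).
Proof.
move=> Hxy Hxz Hyz Hx; rewrite /FDouble sat_Ex.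
have Ex i : upd nu y i x = nu x by rewrite updE (negbTE Hxy).
have Ey i : upd nu y i y = i by rewrite updE eqxx.
have Ezx i k : upd (upd nu y i) z k x = nu x by rewrite updE (negbTE Hxz) Ex.
have Ezy i k : upd (upd nu y i) z k y = i by rewrite updE (negbTE Hyz) Ey.
have Ezz i k : upd (upd nu y i) z k z = k by rewrite updE eqxx.
split.
- move=> [i [Hi [[H1 H2] H3]]]; move: H1 H2 H3; rewrite /= Ex Ey => H1 H2 H3.
  suff Hs : i = (nu x).+1 by subst i; split => //; case: H3 => -[-> ->].
  case: (ltngtP i (nu x).+1) => // H; first lia.
  by exfalso; apply: H2; exists (nu x).+1; rewrite Ezx Ezy Ezz; lia.
- move=> [H1 H2]; exists (nu x).+1; split => //=; rewrite Ex Ey.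
  split; first by split => // -[k [_]]; rewrite Ezx Ezy Ezz; lia.
  by rewrite -H2; case: (ltr (nu x)); [left | right].
Qed.

Lemma sat_first_letter_a nu : fo_sat w nu fo_first_letter_a <-> first_letter_a w.
Proof.
rewrite /fo_first_letter_a sat_All; split=> H x Hx.
- by move=> Hmin; move: (H x Hx); rewrite sat_Imp; apply=> -[y [Hy]]; apply: Hmin.
- by rewrite sat_Imp => Hmin; apply: H => // y Hy Hyx; apply: Hmin; exists y.
Qed.

Lemma sat_last_letter_b nu : fo_sat w nu fo_last_letter_b <-> last_letter_b w.
Proof.
rewrite /fo_last_letter_b sat_All; split=> H x Hx.
- by move=> Hmax; move: (H x Hx); rewrite sat_Imp; apply=> -[y [Hy]]; apply: Hmax.
- by rewrite sat_Imp => Hmax; apply: H => // y Hy Hxy; apply: Hmax; exists y.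
Qed.

Lemma sat_consecutive_doubles_differ nu :
  fo_sat w nu fo_consecutive_doubles_differ <-> consecutive_doubles_differ w.
Proof.
rewrite /fo_consecutive_doubles_differ sat_All; split.
- move=> H x y Hx Hy Dx Dy Hxy Hbetween.
  move: (H x Hx); rewrite sat_All => /(_ y Hy); rewrite sat_Imp sat_Not sat_SameLetter.
  apply; rewrite !sat_And sat_Not sat_Ex sat_Lt !sat_Double //.
  do 3!split => //; move=> [k [Hk]]; rewrite !sat_And !sat_Lt sat_Double //.
  by move=> [H1 [H2 H3]]; exact: (Hbetween k Hk H1 H2 H3).
- move=> H x Hx; rewrite sat_All => y Hy.
  rewrite sat_Imp !sat_And sat_Not sat_Ex sat_Lt !sat_Double // sat_Not sat_SameLetter.
  move=> [Dx [Dy [Hxy Hbetween]]]; apply: H => // z Hz Hxz Hzy Dz.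
  by apply: Hbetween; exists z; rewrite !sat_And !sat_Lt sat_Double.
Qed.

Lemma sat_first_double_a nu : fo_sat w nu fo_first_double_a <-> first_double_a w.
Proof.
rewrite /fo_first_double_a sat_All; split.
- move=> H x Hx Dx Hmin; move: (H x Hx).
  rewrite sat_Imp sat_And sat_Not sat_Ex sat_Double //; apply; split => // -[k [Hk]].
  by rewrite sat_And sat_Lt sat_Double // => -[]; exact: Hmin.
- move=> H x Hx; rewrite sat_Imp sat_And sat_Not sat_Ex sat_Double // => -[Dx Hmin].
  apply: H => // z Hz Hzx Dz; apply: Hmin; exists z.
  by rewrite sat_And sat_Lt sat_Double.
Qed.

Lemma sat_last_double_b nu : fo_sat w nu fo_last_double_b <-> last_double_b w.
Proof.
rewrite /fo_last_double_b sat_All; split.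
- move=> H x Hx Dx Hmax; move: (H x Hx).
  rewrite sat_Imp sat_And sat_Not sat_Ex sat_Double //; apply; split => // -[k [Hk]].
  by rewrite sat_And sat_Lt sat_Double // => -[]; exact: Hmax.
- move=> H x Hx; rewrite sat_Imp sat_And sat_Not sat_Ex sat_Double // => -[Dx Hmax].
  apply: H => // z Hz Hxz Dz; apply: Hmax; exists z.
  by rewrite sat_And sat_Lt sat_Double.
Qed.

Lemma sat_local_shape nu : fo_sat w nu fo_local_shape <-> local_shape w.
Proof.
rewrite /fo_local_shape !sat_And sat_first_letter_a sat_last_letter_b
  sat_consecutive_doubles_differ sat_first_double_a sat_last_double_b.
by split=> [[? [? [? [? ?]]]] | []].
Qed.

End Semantics.

Lemma L_FO_definable : FO_definable L.
Proof.
exists fo_local_shape; split; first exact: fo_local_shape_sentence.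
by move=> w; rewrite L_local_shape sat_local_shape.
Qed.

Definition inv_between (w : word) (c : letter) (x y : nat) :=
  exists z, x < z /\ z < y /\ z < size w /\ letter_at w z = c.

Lemma inv_between_le w c x y : y <= x -> ~ inv_between w c x y.
Proof. by move=> Hyx [z [? [? _]]]; lia. Qed.

Definition same_2type (w1 w2 : word) (i j i' j' : nat) :=
  [/\ letter_at w1 i = letter_at w2 i', letter_at w1 j = letter_at w2 j',
      (i < j <-> i' < j'), (j < i <-> j' < i') &
      forall c, (inv_between w1 c i j <-> inv_between w2 c i' j') /\
                (inv_between w1 c j i <-> inv_between w2 c j' i')].

Lemma same_2type_flip w1 w2 i j i' j' :
  same_2type w1 w2 i j i' j' -> same_2type w1 w2 j i j' i'.
Proof.
by case=> Hi Hj Hlt Hgt Hinv; split => // c; case: (Hinv c).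
Qed.

Lemma same_2type_sym w1 w2 i j i' j' :
  same_2type w1 w2 i j i' j' -> same_2type w2 w1 i' j' i j.
Proof.
case=> Hi Hj Hlt Hgt Hinv; split => //; try by symmetry.
by move=> c; case: (Hinv c) => ? ?; split; symmetry.
Qed.

Lemma same_2type_eq w1 w2 i j i' j' : same_2type w1 w2 i j i' j' -> (i = j <-> i' = j').
Proof.
case=> _ _ [Hlt Hlt'] [Hgt Hgt'] _; split=> E.
- by case: (ltngtP i' j') => // H; [have := Hlt' H | have := Hgt' H]; lia.
- by case: (ltngtP i j) => // H; [have := Hlt H | have := Hgt H]; lia.
Qed.

Lemma same_2type_diag w1 w2 i i' :
  letter_at w1 i = letter_at w2 i' -> same_2type w1 w2 i i i' i'.
Proof.
move=> Hi; split => //; try lia.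
by move=> c; split; split => /inv_between_le; lia.
Qed.

Fixpoint fo2_depth (f : fo2) : nat :=
  match f with
  | GNot g => fo2_depth g
  | GAnd g h | GOr g h => maxn (fo2_depth g) (fo2_depth h)
  | GEx _ g => (fo2_depth g).+1
  | _ => 0
  end.

(* Ehrenfeucht-Fraisse game for two pebbles: [R k i i'] means that a pebble on [i] in
   [w1] and one on [i'] in [w2] can be kept in the same 2-type for [k] more rounds. *)
Section EhrenfeuchtFraisse.
Variables (w1 w2 : word) (R : nat -> nat -> nat -> Prop).
Hypothesis R_mono : forall k i i', R k.+1 i i' -> R k i i'.
Hypothesis R_size : forall k i i', R k i i' -> i < size w1 /\ i' < size w2.
Hypothesis R_forth : forall k j j' i, R k.+1 j j' -> i < size w1 ->
  exists i', R k i i' /\ same_2type w1 w2 i j i' j'.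
Hypothesis R_back : forall k j j' i', R k.+1 j j' -> i' < size w2 ->
  exists i, R k i i' /\ same_2type w1 w2 i j i' j'.

Definition game_position k (nu1 nu2 : bool -> nat) :=
  [/\ R k (nu1 true) (nu2 true), R k (nu1 false) (nu2 false) &
      same_2type w1 w2 (nu1 true) (nu1 false) (nu2 true) (nu2 false)].

Lemma game_position_2type k nu1 nu2 (x y : bool) : game_position k nu1 nu2 ->
  same_2type w1 w2 (nu1 x) (nu1 y) (nu2 x) (nu2 y).
Proof.
case=> _ _ H; have [Ht Hf _ _ _] := H.
by case: x; case: y => //;
  [exact: same_2type_diag Ht | exact: same_2type_flip | exact: same_2type_diag Hf].
Qed.

Lemma game_position_upd2 k nu1 nu2 x i i' : R k.+1 (nu1 (~~ x)) (nu2 (~~ x)) ->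
  R k i i' -> same_2type w1 w2 i (nu1 (~~ x)) i' (nu2 (~~ x)) ->
  game_position k (upd2 nu1 x i) (upd2 nu2 x i').
Proof.
move=> Hy Hi H2; have Hy' := R_mono Hy.
by case: x Hy Hy' H2 => Hy Hy' H2; rewrite /game_position /upd2 /=; split => //;
  exact: same_2type_flip.
Qed.

Lemma fo2_sat_game_position f k nu1 nu2 : fo2_depth f <= k -> game_position k nu1 nu2 ->
  fo2_sat w1 nu1 f <-> fo2_sat w2 nu2 f.
Proof.
elim: f k nu1 nu2
  => [x y|x y|c x|c x y|g IH|g IHg h IHh|g IHg h IHh|x g IH] k nu1 nu2 Hd Hp /=.
- by case: (game_position_2type x y Hp).
- exact: same_2type_eq (game_position_2type x y Hp).
- by case: (game_position_2type x x Hp) => ->.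
- by case: (game_position_2type x y Hp) => _ _ _ _ /(_ c) [].
- by rewrite (IH k nu1 nu2).
- by rewrite (IHg k nu1 nu2) ?(IHh k nu1 nu2) //=; move: Hd => /=; lia.
- by rewrite (IHg k nu1 nu2) ?(IHh k nu1 nu2) //=; move: Hd => /=; lia.
- case: k Hd Hp => [|k] //= Hd Hp.
  have Hy : R k.+1 (nu1 (~~ x)) (nu2 (~~ x)) by case: Hp; case: x.
  split=> [[i [Hi Hs]] | [i' [Hi' Hs]]].
  + have [i' [Ri Hi2]] := R_forth Hy Hi.
    exists i'; split; first by case: (R_size Ri).
    by rewrite -(IH k _ _ Hd (game_position_upd2 Hy Ri Hi2)).
  + have [i [Ri Hi2]] := R_back Hy Hi'.
    exists i; split; first by case: (R_size Ri).
    by rewrite (IH k _ _ Hd (game_position_upd2 Hy Ri Hi2)).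
Qed.

End EhrenfeuchtFraisse.

(* The radius-[r] windows around [j] in [w1] and [j'] in [w2] look alike, word ends
   included; a window cut off by the beginning of a word forces [j = j']. *)
Definition window_eq (w1 : word) (j : nat) (w2 : word) (j' r : nat) :=
  (j < r \/ j' < r -> j = j') /\
  forall z z', z + j' = z' + j -> z <= j + r -> j <= z + r ->
    (z < size w1 <-> z' < size w2) /\ (z < size w1 -> letter_at w1 z = letter_at w2 z').

Lemma window_eq_sym w1 j w2 j' r : window_eq w1 j w2 j' r -> window_eq w2 j' w1 j r.
Proof.
move=> [H1 H2]; split=> [H | z z' E Z1 Z2]; first by apply/esym/H1; lia.
have [K1 K2] := H2 z' z ltac:(lia) ltac:(lia) ltac:(lia).
by split=> [|Hz]; [symmetry | symmetry; apply/K2/K1].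
Qed.

Lemma window_eq_shift w1 j w2 j' r i i' s r' : window_eq w1 j w2 j' r ->
  i + j' = i' + j -> i <= j + s -> j <= i + s -> r' + s <= r -> window_eq w1 i w2 i' r'.
Proof.
move=> [H1 H2] E S1 S2 Hr; split=> [H | z z' E' Z1 Z2]; last by apply: H2; lia.
suff : j = j' by lia.
by apply: H1; lia.
Qed.

Lemma window_eq_letter w1 j w2 j' r z z' : window_eq w1 j w2 j' r ->
  z + j' = z' + j -> z <= j + r -> j <= z + r ->
  (z < size w1 <-> z' < size w2) /\ (z < size w1 -> letter_at w1 z = letter_at w2 z').
Proof. by move=> [_ H]; apply: H. Qed.

Lemma window_eq_trans w1 a w2 b w3 c r :
  window_eq w1 a w2 b r -> window_eq w2 b w3 c r -> window_eq w1 a w3 c r.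
Proof.
move=> [A1 A2] [B1 B2]; split.
  move=> H; case: (ltnP a r) => Ha.
    have Eab := A1 (or_introl Ha).
    suff : b = c by lia.
    by apply: B1; lia.
  have Ebc := B1 (or_intror (ltac:(lia) : c < r)).
  suff : a = b by lia.
  by apply: A1; lia.
move=> z z'' E Z1 Z2.
have Hb : b <= z + b - a + r /\ a <= z + b.
  case: (ltnP a r) => Ha; first by have := A1 (or_introl Ha); lia.
  by case: (ltnP b r) => Hb; first have := A1 (or_intror Hb); lia.
have [P1 P2] := A2 z (z + b - a) ltac:(lia) Z1 Z2.
have [Q1 Q2] := B2 (z + b - a) z'' ltac:(lia) ltac:(lia) ltac:(lia).
by split=> [|Hz]; [rewrite P1 Q1 | rewrite P2 // Q2 //; apply/P1].
Qed.

Lemma inv_between_window w1 j w2 j' r c x y x' y' : window_eq w1 j w2 j' r ->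
  x + j' = x' + j -> y + j' = y' + j ->
  x <= j + r -> j <= x + r -> y <= j + r -> j <= y + r ->
  inv_between w1 c x y -> inv_between w2 c x' y'.
Proof.
move=> W Ex Ey X1 X2 Y1 Y2 [z [Z1 [Z2 [Z3 Z4]]]].
have [P1 P2] :=
  window_eq_letter (z := z) (z' := z + j' - j) W ltac:(lia) ltac:(lia) ltac:(lia).
exists (z + j' - j); split; first lia; split; first lia.
by split; [apply/P1 | rewrite -P2].
Qed.

Lemma inv_between_window_iff w1 j w2 j' r c x y x' y' : window_eq w1 j w2 j' r ->
  x + j' = x' + j -> y + j' = y' + j ->
  x <= j + r -> j <= x + r -> y <= j + r -> j <= y + r ->
  inv_between w1 c x y <-> inv_between w2 c x' y'.
Proof.
move=> W Ex Ey X1 X2 Y1 Y2; split; first exact: inv_between_window W Ex Ey X1 X2 Y1 Y2.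
have [Hstart _] := W; apply: (inv_between_window (window_eq_sym W)); lia.
Qed.

Definition no_triple (w : word) := forall t, t.+2 < size w ->
  ~ (letter_at w t = letter_at w t.+1 /\ letter_at w t.+1 = letter_at w t.+2).

(* Among three consecutive letters both letters occur. *)
Lemma no_triple_inv_between w c x y :
  no_triple w -> x + 4 <= y -> y <= size w -> inv_between w c x y.
Proof.
move=> H Hxy Hy; have := H x.+1 ltac:(lia).
case E1: (letter_at w x.+1); case E2: (letter_at w x.+2); case E3: (letter_at w x.+3) => Hn;
  try (exfalso; apply: Hn; split; congruence); case: c;
  first [ by exists x.+1; rewrite E1; repeat split; lia
        | by exists x.+2; rewrite E2; repeat split; lia
        | by exists x.+3; rewrite E3; repeat split; lia ].
Qed.

Lemma same_2type_far w1 w2 i j i' j' : no_triple w1 -> no_triple w2 ->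
  i < size w1 -> j < size w1 -> i' < size w2 -> j' < size w2 ->
  letter_at w1 i = letter_at w2 i' -> letter_at w1 j = letter_at w2 j' ->
  (i + 4 <= j /\ i' + 4 <= j') \/ (j + 4 <= i /\ j' + 4 <= i') ->
  same_2type w1 w2 i j i' j'.
Proof.
move=> N1 N2 Hi Hj Hi' Hj' Li Lj H; split => //; try lia.
move=> c; case: H => [[H1 H2] | [H1 H2]]; split.
- by split=> _; apply: no_triple_inv_between => //; lia.
- by split=> /inv_between_le; lia.
- by split=> /inv_between_le; lia.
- by split=> _; apply: no_triple_inv_between => //; lia.
Qed.

Definition radius k := 6 * k.+1.
Definition border (Dl k : nat) := Dl * k.+1.

Lemma borderS Dl k : border Dl k.+1 = border Dl k + Dl.
Proof. by rewrite /border; lia. Qed.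

Lemma radiusS k : radius k.+1 = radius k + 6.
Proof. by rewrite /radius; lia. Qed.

Lemma border_le Dl k K : k <= K -> border Dl k <= border Dl K.
Proof. by rewrite /border => H; nia. Qed.

Lemma radius_le k K : k <= K -> radius k <= radius K.
Proof. by rewrite /radius => H; lia. Qed.

Lemma radius_lt_border Dl k : 6 < Dl -> radius k < border Dl k.
Proof. by rewrite /radius /border => H; nia. Qed.

(* Duplicator's invariant with [k] rounds left: equal windows of radius [radius k],
   and a pebble within [border Dl k] of an end of either word has the same distance
   to that end in the other word. *)
Definition matched (w1 w2 : word) (K Dl k i i' : nat) :=
  [/\ k <= K, i < size w1 /\ i' < size w2, window_eq w1 i w2 i' (radius k),
      i < border Dl k \/ i' < border Dl k -> i = i' &
      size w1 - i <= border Dl k \/ size w2 - i' <= border Dl k ->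
        size w1 - i = size w2 - i'].

Lemma matched_mono w1 w2 K Dl k i i' :
  matched w1 w2 K Dl k.+1 i i' -> matched w1 w2 K Dl k i i'.
Proof.
case=> HK Hsz W Hs He; split => //; first lia.
- by apply: (window_eq_shift (s := 0) W); rewrite ?radiusS; lia.
- by move=> H; apply: Hs; rewrite borderS; lia.
- by move=> H; apply: He; rewrite borderS; lia.
Qed.

Lemma matched_letter w1 w2 K Dl k i i' :
  matched w1 w2 K Dl k i i' -> letter_at w1 i = letter_at w2 i'.
Proof.
case=> _ [Hi _] W _ _.
by have [_ ->] := window_eq_letter (z := i) (z' := i') W ltac:(lia) ltac:(lia) ltac:(lia).
Qed.

Lemma matched_sym w1 w2 K Dl k i i' :
  matched w1 w2 K Dl k i i' -> matched w2 w1 K Dl k i' i.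
Proof.
case=> HK [Hi Hi'] W Hs He; split => //; first exact: window_eq_sym.
- by move=> H; apply/esym/Hs; lia.
- by move=> H; apply/esym/He; lia.
Qed.

Section Strategy.
Variables (w1 w2 : word) (K Dl Lam E : nat).
Local Notation n1 := (size w1).
Local Notation n2 := (size w2).

Hypothesis Lam_Dl : Lam + 10 <= Dl.
Hypothesis border_E : border Dl K + radius K + Lam + 10 <= E.
Hypothesis E_n1 : 3 * E <= n1.
Hypothesis E_n2 : 3 * E <= n2.
Hypothesis prefix_eq : forall t, t < E -> letter_at w1 t = letter_at w2 t.
Hypothesis suffix_eq :
  forall t, t < E -> letter_at w1 (n1 - t.+1) = letter_at w2 (n2 - t.+1).
Hypothesis no_triple1 : no_triple w1.
Hypothesis no_triple2 : no_triple w2.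
Hypothesis window_search : forall r i lo, r <= radius K -> r <= i -> i + r < n1 ->
  r <= lo -> lo + Lam + r < n2 -> exists i', lo <= i' <= lo + Lam /\ window_eq w1 i w2 i' r.

Local Notation matched := (matched w1 w2 K Dl).

Lemma matched_start k i : k <= K -> i < border Dl K -> matched k i i.
Proof.
move=> HK Hi; have HK' := border_le Dl HK.
have Hr := radius_le HK; have HrK := radius_lt_border k (ltac:(lia) : 6 < Dl).
split; [done | lia | | done | move=> H; lia].
split=> // z z' Ez Z1 Z2; have -> : z' = z by lia.
by split=> [|_]; [lia | apply: prefix_eq; lia].
Qed.

Lemma matched_end k i i' : k <= K -> i < n1 -> n1 - i <= border Dl K ->
  n1 - i = n2 - i' -> matched k i i'.
Proof.
move=> HK Hi Hend Ei; have HK' := border_le Dl HK.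
have Hr := radius_le HK; have HrK := radius_lt_border k (ltac:(lia) : 6 < Dl).
split; [done | lia | | move=> H; lia | done].
split=> [|z z' Ez Z1 Z2]; first lia.
split=> [|Hz]; first lia.
have := suffix_eq (t := n1 - z.+1) ltac:(lia).
have -> : n1 - (n1 - z.+1).+1 = z by lia.
by have -> : n2 - (n1 - z.+1).+1 = z' by lia.
Qed.

Section Forth.
Variables (k j j' i : nat).
Hypothesis Hm : matched k.+1 j j'.
Hypothesis Hi : i < n1.

Let HK : k < K. Proof. by case: Hm. Qed.
Let Hj : j < n1 /\ j' < n2. Proof. by case: Hm. Qed.
Let HDl : 6 < Dl. Proof. by lia. Qed.

Lemma forth_near : i <= j + 6 -> j <= i + 6 ->
  exists i', matched k i i' /\ same_2type w1 w2 i j i' j'.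
Proof.
move=> Hij Hji; have [_ _ W Hs He] := Hm.
rewrite radiusS in W; rewrite borderS in Hs He.
have := border_le Dl HK; rewrite borderS => HBK; have HrB := radius_lt_border k HDl.
have Hjj : j <= i + j'.
  by case: (ltnP j (radius k + 6)) => H; first have := W.1 (or_introl H); lia.
set i' := i + j' - j; have Ei : i + j' = i' + j by rewrite /i'; lia.
have [P1 P2] := window_eq_letter (z := i) (z' := i') W Ei ltac:(lia) ltac:(lia).
have Hi' : i' < n2 by apply/P1.
exists i'; split.
- split=> //; [lia | | move=> H | move=> H].
  + by apply: (window_eq_shift (s := 6) W) => //; lia.
  + suff : j = j' by lia.
    by apply: Hs; lia.
  + suff : n1 - j = n2 - j' by lia.
    by apply: He; lia.
- split; [exact: P2 | exact: matched_letter Hm | lia | lia | move=> c].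
  by split; apply: (inv_between_window_iff c W); lia.
Qed.

Lemma forth_start : i < border Dl k.+1 ->
  (i + 4 <= j /\ i + 4 <= j') \/ (j + 4 <= i /\ j' + 4 <= i) ->
  exists i', matched k i i' /\ same_2type w1 w2 i j i' j'.
Proof.
move=> Hs Hfar; have Mi := matched_start (ltnW HK) (leq_trans Hs (border_le Dl HK)).
exists i; split => //; have [_ [_ Hi'] _ _ _] := Mi.
exact: same_2type_far no_triple1 no_triple2 Hi Hj.1 Hi' Hj.2
  (matched_letter Mi) (matched_letter Hm) Hfar.
Qed.

Lemma forth_end : n1 - i <= border Dl k.+1 ->
  (i + 4 <= j /\ n2 - (n1 - i) + 4 <= j') \/ (j + 4 <= i /\ j' + 4 <= n2 - (n1 - i)) ->
  exists i', matched k i i' /\ same_2type w1 w2 i j i' j'.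
Proof.
move=> He Hfar; have HeK := leq_trans He (border_le Dl HK).
have Mi : matched k i (n2 - (n1 - i)) by apply: matched_end => //; [exact: ltnW | lia].
exists (n2 - (n1 - i)); split => //; have [_ [_ Hi'] _ _ _] := Mi.
exact: same_2type_far no_triple1 no_triple2 Hi Hj.1 Hi' Hj.2
  (matched_letter Mi) (matched_letter Hm) Hfar.
Qed.

Lemma forth_search_before : border Dl k <= i -> border Dl k < n1 - i -> i + 4 <= j ->
  border Dl k.+1 <= j' -> exists i', matched k i i' /\ same_2type w1 w2 i j i' j'.
Proof.
rewrite borderS => Hs He Hij Hj'.
have := border_le Dl HK; rewrite borderS => HBK; have HrB := radius_lt_border k HDl.
have Hr := radius_le (ltnW HK).
have [i' [/andP [I1 I2] W]] := window_search (r := radius k) (i := i) (lo := border Dl k)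
  ltac:(lia) ltac:(lia) ltac:(lia) ltac:(lia) ltac:(lia).
have Hi' : i' < n2 by lia.
have Mi : matched k i i' by split=> //; [lia | move=> H | move=> H]; lia.
exists i'; split => //.
by apply: same_2type_far no_triple1 no_triple2 Hi Hj.1 Hi' Hj.2
  (matched_letter Mi) (matched_letter Hm) _; lia.
Qed.

Lemma forth_search_after : border Dl k <= i -> border Dl k < n1 - i -> j + 4 <= i ->
  border Dl k.+1 < n2 - j' -> exists i', matched k i i' /\ same_2type w1 w2 i j i' j'.
Proof.
rewrite borderS => Hs He Hji Hj'.
have := border_le Dl HK; rewrite borderS => HBK; have HrB := radius_lt_border k HDl.
have Hr := radius_le (ltnW HK).
have [i' [/andP [I1 I2] W]] := window_search (r := radius k) (i := i)
  (lo := n2 - (border Dl k + Lam + 1))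
  ltac:(lia) ltac:(lia) ltac:(lia) ltac:(lia) ltac:(lia).
have Hi' : i' < n2 by lia.
have Mi : matched k i i' by split=> //; [lia | move=> H | move=> H]; lia.
exists i'; split => //.
by apply: same_2type_far no_triple1 no_triple2 Hi Hj.1 Hi' Hj.2
  (matched_letter Mi) (matched_letter Hm) _; lia.
Qed.

End Forth.

Lemma matched_forth k j j' i : matched k.+1 j j' -> i < n1 ->
  exists i', matched k i i' /\ same_2type w1 w2 i j i' j'.
Proof.
move=> Hm Hi; have [HK [Hj Hj'] _ Hs He] := Hm.
have HB := borderS Dl k; have HBK := border_le Dl HK.
have [[Hij Hji] | Hfar] : i <= j + 6 /\ j <= i + 6 \/ i + 7 <= j \/ j + 7 <= i by lia.
  exact: forth_near.
have Hstart : j = j' \/ border Dl k.+1 <= j /\ border Dl k.+1 <= j'.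
  by case: (ltnP j (border Dl k.+1)) (ltnP j' (border Dl k.+1)) => [H _ | H [H' | H']];
    [left; apply: Hs; left | left; apply: Hs; right | right].
have Hend : n1 - j = n2 - j' \/ border Dl k.+1 < n1 - j /\ border Dl k.+1 < n2 - j'.
  by case: (leqP (n1 - j) (border Dl k.+1)) (leqP (n2 - j') (border Dl k.+1))
    => [H _ | H [H' | H']]; [left; apply: He; left | left; apply: He; right | right].
case: (ltnP i (border Dl k)) => Hi1.
  by apply: forth_start => //; lia.
case: (ltnP (border Dl k) (n1 - i)) => Hi2; last by apply: forth_end => //; lia.
case: Hfar => Hfar.
- case: (ltnP j' (border Dl k.+1)) => Hj1.
    by apply: forth_start => //; lia.
  by apply: forth_search_before => //; lia.
- case: (leqP (n2 - j') (border Dl k.+1)) => Hj1.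
    by apply: forth_end => //; lia.
  by apply: forth_search_after => //; lia.
Qed.

End Strategy.

Section Equivalence.
Variables (w1 w2 : word) (K Dl Lam E : nat).
Local Notation n1 := (size w1).
Local Notation n2 := (size w2).

Hypothesis Lam_Dl : Lam + 10 <= Dl.
Hypothesis border_E : border Dl K + radius K + Lam + 10 <= E.
Hypothesis E_n1 : 3 * E <= n1.
Hypothesis E_n2 : 3 * E <= n2.
Hypothesis prefix_eq : forall t, t < E -> letter_at w1 t = letter_at w2 t.
Hypothesis suffix_eq :
  forall t, t < E -> letter_at w1 (n1 - t.+1) = letter_at w2 (n2 - t.+1).
Hypothesis no_triple1 : no_triple w1.
Hypothesis no_triple2 : no_triple w2.
Hypothesis window_search12 : forall r i lo, r <= radius K -> r <= i -> i + r < n1 ->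
  r <= lo -> lo + Lam + r < n2 -> exists i', lo <= i' <= lo + Lam /\ window_eq w1 i w2 i' r.
Hypothesis window_search21 : forall r i lo, r <= radius K -> r <= i -> i + r < n2 ->
  r <= lo -> lo + Lam + r < n1 -> exists i', lo <= i' <= lo + Lam /\ window_eq w2 i w1 i' r.

Lemma fo2_sat_equiv f : fo2_depth f <= K ->
  fo2_sat w1 (fun _ => 0) f <-> fo2_sat w2 (fun _ => 0) f.
Proof.
move=> Hd; apply: (@fo2_sat_game_position w1 w2 (matched w1 w2 K Dl) _ _ _ _ f K) => //.
- exact: matched_mono.
- by move=> k i i' [].
- exact: matched_forth Lam_Dl border_E E_n1 E_n2 prefix_eq suffix_eq
    no_triple1 no_triple2 window_search12.
- move=> k j j' i' Hm Hi'.
  have prefix_eq' t : t < E -> letter_at w2 t = letter_at w1 t by move/prefix_eq.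
  have suffix_eq' t : t < E -> letter_at w2 (n2 - t.+1) = letter_at w1 (n1 - t.+1).
    by move/suffix_eq.
  have [i [Mi Ti]] := matched_forth Lam_Dl border_E E_n2 E_n1 prefix_eq'
    suffix_eq' no_triple2 no_triple1 window_search21 (matched_sym Hm) Hi'.
  by exists i; split; [exact: matched_sym | exact: same_2type_sym].
- have M0 : matched w1 w2 K Dl K 0 0.
    apply: (matched_start Lam_Dl border_E E_n1 E_n2 prefix_eq (leqnn K)).
    by have := radius_lt_border K (ltac:(lia) : 6 < Dl); rewrite /radius; lia.
  by split => //; exact: same_2type_diag (matched_letter M0).
Qed.

End Equivalence.

Lemma size_ab_pow j : size (ab_pow j) = 2 * j.
Proof. by elim: j => //= j IH; rewrite /ab_pow /= in IH *; lia. Qed.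

Lemma nth_ab_pow j e : e < 2 * j -> nth La (ab_pow j) e = if odd e then Lb else La.
Proof.
elim: j e => [|j IH] e He; first lia.
by case: e He => [|[|e]] He //=; rewrite IH /= ?negbK //; lia.
Qed.

Lemma flatten_nseqS (T : Type) n (s : seq T) :
  flatten (nseq n.+1 s) = s ++ flatten (nseq n s).
Proof. by []. Qed.

Definition letter_of (b : bool) : letter := if b then La else Lb.

Lemma letter_of_inj a b : letter_of a = letter_of b -> a = b.
Proof. by case: a; case: b. Qed.

Section Blocks.
Variable N : nat.

Definition period := 4 * N + 2.

Definition block : word := La :: ab_pow N ++ Lb :: ab_pow N.

Definition block_is_a e :=
  [|| e == 0, (0 < e <= N.*2) && odd e | (N.*2.+2 <= e) && ~~ odd e].

Lemma size_block : size block = period.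
Proof. by rewrite /block /= size_cat /= !size_ab_pow /period; lia. Qed.

Lemma nth_block e : e < period -> nth La block e = letter_of (block_is_a e).
Proof.
rewrite /period /block_is_a => He; case: e He => [|e] He //=.
rewrite nth_cat size_ab_pow; case: (ltnP e (2 * N)) => H1.
  by rewrite nth_ab_pow //; case: ifP => Ho; rewrite /letter_of; case: ifP => //; lia.
case Ef: (e - 2 * N) => [|f] /=; first by rewrite /letter_of; case: ifP => //; lia.
by rewrite nth_ab_pow; [case: ifP => Ho; rewrite /letter_of; case: ifP => //; lia | lia].
Qed.

Lemma period_gt0 : 0 < period.
Proof. by rewrite /period addn2. Qed.

Lemma modn_period x y : y < period -> (x * period + y) %% period = y.
Proof. by move=> H; rewrite modnMDl modn_small. Qed.

Lemma modn_periodS t :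
  t.+1 %% period = if (t %% period).+1 == period then 0 else (t %% period).+1.
Proof.
have Hd := divn_eq t period; have Hl := ltn_pmod t period_gt0.
set q := t %/ period in Hd; set e := t %% period in Hd Hl *.
rewrite {1}Hd; case: eqP => He.
  have -> : (q * period + e).+1 = q.+1 * period + 0 by rewrite mulSn; lia.
  by rewrite modn_period ?period_gt0.
have -> : (q * period + e).+1 = q * period + e.+1 by lia.
by rewrite modn_period //; lia.
Qed.

Variable M : nat.

Definition blocks : word := flatten (nseq M block).

Lemma size_blocks : size blocks = M * period.
Proof.
rewrite /blocks; elim: M => // k IH.
by rewrite flatten_nseqS size_cat IH size_block mulSn.
Qed.

Lemma letter_blocks t : t < M * period ->
  letter_at blocks t = letter_of (block_is_a (t %% period)).
Proof.
rewrite /letter_at /blocks; elim: M t => [|k IH] t Ht; first lia.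
rewrite flatten_nseqS nth_cat size_block; case: (ltnP t period) => H.
  by rewrite nth_block // modn_small.
rewrite IH; last by move: Ht; rewrite mulSn; lia.
by rewrite -{2}(subnK H) modnDr.
Qed.

Lemma letter_blocks_at t x y : t = x * period + y -> y < period -> t < size blocks ->
  letter_at blocks t = letter_of (block_is_a y).
Proof.
by move=> -> Hy; rewrite size_blocks => Ht; rewrite letter_blocks // modn_period.
Qed.

Lemma no_triple_blocks : no_triple blocks.
Proof.
move=> t; rewrite size_blocks => Ht; rewrite !letter_blocks; try lia.
rewrite !modn_periodS; have := ltn_pmod t period_gt0; move: (t %% period) => e He.
move=> [/letter_of_inj H1 /letter_of_inj H2]; move: H1 H2.
case: (e.+1 =P period) => H1 /=.
  by case: (1 =P period) => H2 /=; rewrite /block_is_a /period in H1 H2 *; lia.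
by case: (e.+2 =P period) => H2 /=; rewrite /block_is_a /period in H1 H2 *; lia.
Qed.

Lemma L_blocks : L blocks.
Proof.
rewrite /blocks; elim: M => [|k IH]; first exact: m_star0.
rewrite flatten_nseqS /block /= -catA; apply: L_cons; exact: L_ab_pow_cat.
Qed.

Lemma blocks_window_search r i lo : r <= i -> i + r < size blocks -> r <= lo ->
  lo + period + r <= size blocks ->
  exists t, lo <= t < lo + period /\ window_eq blocks i blocks t r.
Proof.
move=> H1 H2 H3 H4.
have Hd := divn_eq lo period; have Hl := ltn_pmod lo period_gt0.
have Hl' := ltn_pmod i period_gt0.
set t := if lo %% period <= i %% period then lo %/ period * period + i %% period
         else (lo %/ period).+1 * period + i %% period.
have Ht : t %% period = i %% period by rewrite /t; case: ifP => _; rewrite modn_period.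
have Htr : lo <= t < lo + period by rewrite /t; case: ifP => He; rewrite ?mulSn; lia.
exists t; split=> //; split=> [|z z' Ez Z1 Z2]; first lia.
split=> [|Hz]; first lia.
rewrite !letter_blocks -?size_blocks; try lia.
suff -> : z %% period = z' %% period by [].
have : (z + t) %% period = (z' + i) %% period by rewrite Ez.
by rewrite -modnDmr Ht modnDmr => /eqP; rewrite eqn_modDr => /eqP.
Qed.

End Blocks.

Section Insertion.
Variables m c : nat.
Local Notation P := (period (2 * m)).
Local Notation u := (blocks (2 * m) (2 * c + 2)).

(* Offset [6m + 2] of block number [c] lies in its second (ab)^(2m) and carries an a. *)
Definition ins_pos := c * P + 6 * m + 2.
Definition inserted : word := take ins_pos u ++ La :: drop ins_pos u.

Local Notation p := ins_pos.
Local Notation v := inserted.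
Local Notation q := (c.+1 * P).

Lemma period_eq : P = 8 * m + 2.
Proof. by rewrite /period; lia. Qed.

Lemma size_u : size u = (2 * c + 2) * P.
Proof. exact: size_blocks. Qed.

Lemma ins_pos_lt : p.+1 < size u.
Proof. by rewrite size_u /ins_pos period_eq; nia. Qed.

Lemma size_inserted : size v = (size u).+1.
Proof.
have H := ins_pos_lt; rewrite /inserted size_cat /= size_take size_drop.
by rewrite (_ : (p < size u) = true); [lia | apply/idP; lia].
Qed.

Lemma nth_inserted t : nth La v t =
  if t < p then nth La u t else if t == p then La else nth La u t.-1.
Proof.
have H := ins_pos_lt; rewrite /inserted nth_cat size_take.
rewrite (_ : (p < size u) = true); last by apply/idP; lia.
case: ltnP => Ht; first by rewrite nth_take.
case: eqP => [->|Hne]; first by rewrite subnn.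
by rewrite (_ : t - p = (t - p).-1.+1) /= ?nth_drop; [congr nth; lia | lia].
Qed.

Lemma inserted_before t : t < p -> letter_at v t = letter_at u t.
Proof. by move=> Ht; rewrite /letter_at nth_inserted Ht. Qed.

Lemma inserted_after t : p < t -> letter_at v t = letter_at u t.-1.
Proof.
by move=> Ht; rewrite /letter_at nth_inserted ltnNge (ltnW Ht) /= (gtn_eqF Ht).
Qed.

Lemma inserted_at : letter_at v p = La.
Proof. by rewrite /letter_at nth_inserted ltnn eqxx. Qed.

Hypothesis m_gt0 : 0 < m.

Lemma ins_pos_lt_next : p < q.
Proof. by rewrite /ins_pos mulSn period_eq; lia. Qed.

Lemma u_at_ins_pos : letter_at u p = La.
Proof.
have H := ins_pos_lt.
rewrite (letter_blocks_at (x := c) (y := 6 * m + 2)); last exact: ltnW.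
- by rewrite /letter_of /block_is_a; case: ifP => //; lia.
- by rewrite /ins_pos addnA.
- by rewrite period_eq; lia.
Qed.

Lemma inserted_upto t : t <= p -> letter_at v t = letter_at u t.
Proof.
rewrite leq_eqVlt => /orP [/eqP ->|H]; last exact: inserted_before.
by rewrite inserted_at u_at_ins_pos.
Qed.

(* Around the inserted letter, [v] looks like [u] around the start [q] of the next block:
   ... a b a b | a a b a b ... *)
Lemma inserted_right d : d <= 2 * m -> letter_at v (p + d) = letter_at u (q + d).
Proof.
move=> Hd; have H := ins_pos_lt; have Hpq := ins_pos_lt_next.
have Hs : q + d < size u by rewrite size_u period_eq in H *; nia.
case: d Hd Hs => [|d] Hd Hs.
  rewrite addn0 inserted_at (letter_blocks_at (x := c.+1) (y := 0)) //; lia.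
rewrite inserted_after; last lia.
rewrite (letter_blocks_at (x := c) (y := 6 * m + 2 + d)); first last.
- lia.
- by rewrite period_eq; lia.
- by rewrite /ins_pos; lia.
rewrite (letter_blocks_at (x := c.+1) (y := d.+1)) //; last by rewrite period_eq; lia.
by congr letter_of; rewrite /block_is_a; lia.
Qed.

Lemma inserted_left d : d <= 2 * m -> letter_at v (p - d) = letter_at u (q - d).
Proof.
move=> Hd; have H := ins_pos_lt; have Hpq := ins_pos_lt_next.
have Hq : q < size u by rewrite size_u period_eq; nia.
rewrite inserted_upto; last lia.
case: d Hd => [|d] Hd.
  rewrite !subn0 u_at_ins_pos (letter_blocks_at (x := c.+1) (y := 0)) //; lia.
rewrite (letter_blocks_at (x := c) (y := 6 * m + 1 - d)); first last.
- lia.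
- by rewrite period_eq; lia.
- by rewrite /ins_pos; lia.
rewrite (letter_blocks_at (x := c) (y := P - d.+1)); first last.
- lia.
- by rewrite period_eq; lia.
- by rewrite mulSn period_eq in Hpq *; lia.
by congr letter_of; rewrite period_eq /block_is_a; lia.
Qed.

Lemma inserted_near z : p - 2 * m <= z -> z <= p + 2 * m ->
  letter_at v z = letter_at u (z + q - p).
Proof.
move=> H1 H2; have H := ins_pos_lt_next.
case: (leqP p z) => H3.
  have := inserted_right (d := z - p) ltac:(lia).
  have -> : p + (z - p) = z by lia.
  by have -> : q + (z - p) = z + q - p by lia.
have := inserted_left (d := p - z) ltac:(lia).
have -> : p - (p - z) = z by lia.
by have -> : q - (p - z) = z + q - p by lia.
Qed.

Lemma no_triple_inserted : no_triple v.
Proof.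
move=> t; rewrite size_inserted => Ht.
have H := ins_pos_lt; have Hpq := ins_pos_lt_next.
have Nu := @no_triple_blocks (2 * m) (2 * c + 2).
case: (leqP t.+2 p) => H1.
  by rewrite !inserted_upto; try lia; apply: Nu; lia.
case: (ltnP p t) => H2.
  rewrite !inserted_after; try lia.
  have -> : t.+1.-1 = t.-1.+1 by lia.
  have -> : t.+2.-1 = t.-1.+2 by lia.
  by apply: Nu; lia.
have Hs : q + 2 * m < size u by rewrite size_u period_eq; nia.
rewrite !inserted_near; try lia.
have -> : t.+1 + q - p = (t + q - p).+1 by lia.
have -> : t.+2 + q - p = (t + q - p).+2 by lia.
by apply: Nu; lia.
Qed.

Lemma window_eq_before t r : t + r <= p -> window_eq u t v t r.
Proof.
move=> H; have Hp := ins_pos_lt; split=> // z z' Ez Z1 Z2; have -> : z' = z by lia.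
rewrite size_inserted; split=> [|_]; first lia.
by rewrite inserted_upto //; lia.
Qed.

Lemma window_eq_after s r : p + r <= s -> r <= s -> window_eq u s v s.+1 r.
Proof.
move=> H1 H2; split=> [|z z' Ez Z1 Z2]; first lia.
have -> : z' = z.+1 by lia.
rewrite size_inserted; split=> [|_]; first lia.
by rewrite inserted_after //; lia.
Qed.

Lemma window_eq_near i r : r <= i -> 2 * r <= 2 * m -> p <= i + r -> i <= p + r ->
  window_eq v i u (i + q - p) r.
Proof.
move=> H0 H1 H2 H3; have Hpq := ins_pos_lt_next.
have Hs : q + 2 * m < size u by rewrite size_u period_eq; nia.
split=> [|z z' Ez Z1 Z2]; first lia.
rewrite size_inserted; split=> [|_]; first lia.
by rewrite inserted_near; [congr letter_at | |]; lia.
Qed.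

Lemma window_search_uv r i lo : r < m -> r <= i -> i + r < size u -> r <= lo ->
  lo + 3 * P + r < size v -> exists i', lo <= i' <= lo + 3 * P /\ window_eq u i v i' r.
Proof.
move=> Hr Hri Hi Hlo; rewrite size_inserted => Hend.
have HP : 2 * r + 2 <= P by rewrite period_eq; lia.
have Hp := ins_pos_lt; have Hsz : p + P + 2 * r + 2 <= size u.
  by rewrite size_u /ins_pos period_eq in Hp *; nia.
case: (leqP (lo + P + r) p) => Hbefore.
  have [t [/andP [T1 T2] W]] := blocks_window_search Hri Hi Hlo ltac:(lia).
  exists t; split; first lia.
  by apply: (window_eq_trans W); apply: window_eq_before; lia.
set lo' := maxn lo (p + r + 1).
have [t [/andP [T1 T2] W]] :=
  blocks_window_search (lo := lo' - 1) Hri Hi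
    ltac:(rewrite /lo'; lia) ltac:(rewrite /lo'; lia).
exists t.+1; split; first by rewrite /lo' in T1 T2; lia.
by apply: (window_eq_trans W); apply: window_eq_after; rewrite /lo' in T1; lia.
Qed.

Lemma window_search_vu r i lo : r < m -> r <= i -> i + r < size v -> r <= lo ->
  lo + 3 * P + r < size u -> exists i', lo <= i' <= lo + 3 * P /\ window_eq v i u i' r.
Proof.
move=> Hr Hri; rewrite size_inserted => Hi Hlo Hend.
have HP : 2 * r + 2 <= P by rewrite period_eq; lia.
have Hp := ins_pos_lt; have Hpq := ins_pos_lt_next.
have Hq : q + 2 * m < size u by rewrite size_u period_eq; nia.
have [t [W T1 T2]] : exists t, [/\ window_eq v i u t r, r <= t & t + r < size u].
  case: (leqP (i + r) p) => H1.
    by exists i; split; [exact: window_eq_sym (window_eq_before H1) | lia | lia].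
  case: (ltnP (p + r) i) => H2.
    exists i.-1; split; [| lia | lia].
    have := window_eq_sym (@window_eq_after i.-1 r ltac:(lia) ltac:(lia)).
    by rewrite (_ : i.-1.+1 = i) //; lia.
  by exists (i + q - p); split; [apply: window_eq_near | |]; lia.
have [i' [/andP [I1 I2] W']] := blocks_window_search T1 T2 Hlo ltac:(lia).
by exists i'; split; [lia | exact: window_eq_trans W W'].
Qed.

End Insertion.

Lemma odd_size_inserted m c : odd (size (inserted m c)).
Proof.
rewrite size_inserted size_u /=.
have -> : (2 * c + 2) * period (2 * m) = ((c + 1) * period (2 * m)).*2.
  by rewrite -mul2n; lia.
by rewrite odd_double.
Qed.

Lemma L_not_FO2Inv_definable : ~ FO2Inv_definable L.
Proof.
move=> [f [_ Hf]].
set K := fo2_depth f; set m := (radius K).+1; set P := period (2 * m).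
set Lam := 3 * P; set Dl := Lam + 10; set E := border Dl K + radius K + Lam + 10.
set u := blocks (2 * m) (2 * E + 2); set v := inserted m E.
have Hm : 0 < m by [].
have HP : P = 8 * m + 2 := period_eq m.
have Hsu : size u = (2 * E + 2) * P := size_u m E.
have Hsv : size v = (size u).+1 := size_inserted m E.
have Hp := ins_pos_lt m E; rewrite -/u /ins_pos -/P in Hp.
have HEP : E <= E * P by rewrite HP; nia.
have prefix_eq t : t < E -> letter_at u t = letter_at v t.
  by move=> Ht; rewrite inserted_before // /ins_pos -/P; nia.
have suffix_eq t : t < E -> letter_at u (size u - t.+1) = letter_at v (size v - t.+1).
  move=> Ht; rewrite inserted_after //; last by rewrite Hsv /ins_pos -/P Hsu; nia.
  by congr letter_at; lia.
have := @fo2_sat_equiv u v K Dl Lam E ltac:(lia) (leqnn _)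
  ltac:(rewrite Hsu; nia) ltac:(rewrite Hsv Hsu; nia) prefix_eq suffix_eq
  (@no_triple_blocks _ _) (no_triple_inserted Hm)
  (fun r i lo Hr => window_search_uv Hm (ltac:(lia) : r < m))
  (fun r i lo Hr => window_search_vu Hm (ltac:(lia) : r < m)) f (leqnn _).
rewrite -!Hf => HL.
have := L_even_size (HL.1 (L_blocks _ _)).
by rewrite odd_size_inserted.
Qed.

Theorem corollary7 : FO_definable L /\ ~ FO2Inv_definable L.
Proof. split; [exact: L_FO_definable | exact: L_not_FO2Inv_definable]. Qed.
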